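(* Let $n\ge 2$ and let $\mathcal{F}$ be a maximal coclique of $\Gamma_{2n}$. Let $A$ be an $(n-1)$-space of $\mathrm{PG}(2n,q)$ that occurs in a flag of $\mathcal{F}$. Then there exists $k\in\{1,\ldots,n+1\}$ such that the number of flags in $\mathcal{F}$ that contain $A$ is $\begin{bmatrix}k\\ 1\end{bmatrix}_q$. Furthermore, this number is $\begin{bmatrix}n+1\\ 1\end{bmatrix}_q$ if and only if every flag $(A',B')\in \mathcal{F}$ satisfies $B'\cap A\neq \emptyset$.
   Context: $\mathrm{PG}(2n,q)$ is the projective space of projective dimension $2n$ over the field of order $q$; an $i$-space is a subspace of projective dimension $i$. An $(n-1,n)$-flag is a pair $(A,B)$ with $A$ an $(n-1)$-space, $B$ an $n$-space and $A\subseteq B$; it ''contains'' $A$ if its $(n-1)$-space is $A$. Two such flags $(A_1,B_1),(A_2,B_2)$ are opposite if $A_1\cap B_2=A_2\cap B_1=\emptyset$. $\Gamma_{2n}$ is the graph whose vertices are the $(n-1,n)$-flags, adjacent when opposite; a maximal coclique is an inclusion-maximal set of pairwise non-opposite flags. $\begin{bmatrix}k\\ 1\end{bmatrix}_q=\frac{q^k-1}{q-1}$. *)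

From mathcomp Require Import all_boot all_order all_algebra all_fingroup all_field.
Set Implicit Arguments. Unset Strict Implicit. Unset Printing Implicit Defensive.
Import GRing.Theory.

(* Subspaces of F^m (i.e. of the projective space PG(m-1,F)), represented
   canonically by their row-space normal form <<A>>%MS.  A projective
   i-space is a vector subspace of rank i+1. *)
Definition subsp (F : fieldType) (m : nat) := {A : 'M[F]_m | (<<A>>%MS == A)}.

(* An (n-1,n)-flag of PG(2n,q): vector subspaces of F^(2n+1) of ranks n, n+1. *)
Definition is_flag (F : fieldType) (n : nat)
  (fl : subsp F (2 * n).+1 * subsp F (2 * n).+1) : bool :=
  [&& \rank (val fl.1) == n, \rank (val fl.2) == n.+1 & (val fl.1 <= val fl.2)%MS].

Definition flag (F : finFieldType) (n : nat) :=
  {fl : subsp F (2 * n).+1 * subsp F (2 * n).+1 | is_flag fl}.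

Definition flagA F n (f : flag F n) : subsp F (2 * n).+1 := (val f).1.
Definition flagB F n (f : flag F n) : subsp F (2 * n).+1 := (val f).2.

(* projectively empty intersection = trivial vector intersection *)
Definition disjoint_sp F m (U V : subsp F m) : bool :=
  \rank (val U :&: val V)%MS == 0%N.

Definition opposite F n (f g : flag F n) : bool :=
  disjoint_sp (flagA f) (flagB g) && disjoint_sp (flagA g) (flagB f).

Definition coclique F n (C : {set flag F n}) : Prop :=
  forall f g, f \in C -> g \in C -> ~~ opposite f g.

Definition maximal_coclique F n (C : {set flag F n}) : Prop :=
  coclique C /\ forall D : {set flag F n}, coclique D -> C \subset D -> D = C.

Definition qbin1 (q k : nat) : nat := (q ^ k - 1) %/ (q - 1).

From mathcomp Require Import all_boot all_order all_algebra all_fingroup all_field.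
From mathcomp Require Import mxabelem zify.
Set Implicit Arguments. Unset Strict Implicit. Unset Printing Implicit Defensive.

(* If g = (A', B') is a flag with A \cap B' = 0, then a flag (A, B)
   is not opposite to g exactly when B lies in the hyperplane <A, A'>; all
   other flags g are trivially not opposite to (A, B).  By maximality, the
   flags of the coclique through A are therefore exactly the flags (A, B)
   with B inside the intersection W of these hyperplanes, and there are
   [k 1]_q of them, where k = dim W - dim A.  The count reaches [n+1 1]_q
   only when W is the whole space, i.e. when no such g exists. *)

Section GaussianBinomial.

Variable q : nat.
Hypothesis q_gt1 : 1 < q.

Lemma qbin1_mul k : qbin1 q k * (q - 1) = q ^ k - 1.
Proof.
rewrite /qbin1; have := subn_exp q 1 k; rewrite exp1n => ->.
by rewrite mulnC mulKn //; lia.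
Qed.

Lemma qbin1_inj : injective (qbin1 q).
Proof.
move=> k1 k2 eq_k; apply/eqP; rewrite -(eqn_exp2l _ _ q_gt1).
have := qbin1_mul k1; have := qbin1_mul k2; rewrite eq_k => ->.
have := expn_gt0 q k1; have := expn_gt0 q k2; rewrite (ltnW q_gt1) /=; lia.
Qed.

Lemma qbin1_gt0 k : (0 < qbin1 q k) = (0 < k).
Proof.
have q1_gt0 : 0 < q - 1 by lia.
by rewrite -(ltn_pmul2r q1_gt0) mul0n qbin1_mul subn_gt0 -{1}(expn0 q) ltn_exp2l.
Qed.

End GaussianBinomial.

Section SubspaceCounting.

Variables (F : finFieldType) (m : nat).
Local Notation q := #|F|.

Lemma card_rowgD m1 m2 (X : 'M[F]_(m1, m)) (Y : 'M[F]_(m2, m)) :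
  (X <= Y)%MS -> #|rowg Y :\: rowg X| = q ^ \rank Y - q ^ \rank X.
Proof. by move=> sXY; rewrite cardsD (setIidPr _) ?rowgS // !card_rowg. Qed.

Lemma mxrank_adds_row k (X : 'M[F]_(k, m)) (v : 'rV[F]_m) :
  ~~ (v <= X)%MS -> \rank (X + v)%MS = (\rank X).+1.
Proof.
move=> vNX; have := (mxrank_adds_leqif X v).1; have := rank_leq_row v.
have : (X < X + v)%MS by rewrite ltmxE addsmxSl addsmx_sub submx_refl.
rewrite ltmxErank => /andP [_]; lia.
Qed.

Definition covers k (X : 'M[F]_(k, m)) (W : 'M[F]_m) : {set 'M[F]_m} :=
  [set B | [&& <<B>>%MS == B, \rank B == (\rank X).+1, (X <= B)%MS & (B <= W)%MS]].

Lemma card_covers k (X : 'M[F]_(k, m)) (W : 'M[F]_m) :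
  (X <= W)%MS -> #|covers X W| = qbin1 q (\rank W - \rank X).
Proof.
move=> sXW; have q_gt1 : 1 < q := card_finNzRing_gt1 F.
pose span_with (v : 'rV[F]_m) := <<(X + v)%MS>>%MS.
have span_covers v : v \in rowg W :\: rowg X -> span_with v \in covers X W.
  rewrite !inE => /andP [vNX vW].
  by rewrite genmx_id !genmxE mxrank_adds_row // addsmxSl addsmx_sub sXW vW !eqxx.
have card_fibre B : B \in covers X W ->
    #|[set v in rowg W :\: rowg X | span_with v == B]| = q ^ (\rank X).+1 - q ^ \rank X.
  rewrite inE => /and4P [/eqP defB /eqP rB sXB sBW].
  rewrite -rB -card_rowgD //; apply: eq_card => v; rewrite !inE.
  case vX: (v <= X)%MS => //=.
  apply/andP/idP => [[_ /eqP <-] | vB]; first by rewrite genmxE addsmxSr.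
  split; first exact: submx_trans vB sBW.
  have sXvB : (X + v <= B)%MS by rewrite addsmx_sub sXB.
  rewrite /span_with -defB; apply/eqP/genmxP.
  by rewrite -(mxrank_leqif_eq sXvB).2 mxrank_adds_row ?vX // rB.
have count : #|rowg W :\: rowg X| = #|covers X W| * (q ^ (\rank X).+1 - q ^ \rank X).
  rewrite -sum1_card (partition_big span_with (mem (covers X W)) span_covers) /=.
  rewrite -sum_nat_const; apply: eq_bigr => B /card_fibre <-.
  by rewrite -sum1_card; apply: eq_bigl => v; rewrite inE.
set r := \rank X; set d := \rank W - r.
have rW : \rank W = r + d by rewrite subnKC // mxrankS.
have e1 : q ^ \rank W - q ^ r = q ^ r * (q ^ d - 1) by rewrite rW expnD mulnBr muln1.
have e2 : q ^ r.+1 - q ^ r = q ^ r * (q - 1) by rewrite expnSr mulnBr muln1.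
move: count; rewrite card_rowgD // e1 e2 mulnCA => /eqP.
rewrite eqn_pmul2l ?expn_gt0 ?(ltnW q_gt1) // -qbin1_mul // eqn_pmul2r ?subn_gt0 //.
by move/eqP.
Qed.

End SubspaceCounting.

Lemma capmx_neq0_sub_addsmx (F : fieldType) m (A B A' : 'M[F]_m) :
  (A <= B)%MS -> \rank B = (\rank A).+1 -> \rank (A :&: A')%MS = 0 ->
  (\rank (A' :&: B)%MS != 0) = (B <= A + A')%MS.
Proof.
move=> sAB rB capAA'0.
have sAA'_A'B : (A + A' <= A' + B)%MS.
  by rewrite addsmx_sub addsmxSl (submx_trans sAB) ?addsmxSr.
have := mxrank_sum_cap A' B; have := mxrank_sum_cap A A'.
have := mxrankS sAA'_A'B.
have -> : (B <= A + A')%MS = (A' + B <= A + A')%MS by rewrite addsmx_sub addsmxSr.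
rewrite -(mxrank_leqif_sup sAA'_A'B).2; lia.
Qed.

Section Flags.

Variables (F : finFieldType) (n : nat).
Implicit Types (f g : flag F n) (C : {set flag F n}) (A : subsp F (2 * n).+1).

Lemma flagP f :
  [/\ \rank (val (flagA f)) = n, \rank (val (flagB f)) = n.+1
    & (val (flagA f) <= val (flagB f))%MS].
Proof.
case: f => [[a b] flag_ab]; rewrite /flagA /flagB /=.
by case/and3P: flag_ab => /eqP ? /eqP ? ?.
Qed.

Lemma disjoint_spC m (U V : subsp F m) : disjoint_sp U V = disjoint_sp V U.
Proof. by rewrite /disjoint_sp capmxC. Qed.

Lemma opposite_sym f g : opposite f g = opposite g f.
Proof. exact: andbC. Qed.

Lemma opposite_irrefl f : 0 < n -> ~~ opposite f f.
Proof.
have [rA _ sAB] := flagP f.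
by rewrite /opposite /disjoint_sp andbb (capmx_idPl sAB) rA -lt0n.
Qed.

Lemma not_opposite_sub f g : disjoint_sp (flagA f) (flagB g) ->
  ~~ opposite f g = (val (flagB f) <= val (flagA f) + val (flagA g))%MS.
Proof.
move=> disj_fg; have [rA rB sAB] := flagP f; have [_ _ sAB'] := flagP g.
rewrite /opposite disj_fg -capmx_neq0_sub_addsmx ?rA ?rB //.
have /mxrankS : (val (flagA f) :&: val (flagA g) <= val (flagA f) :&: val (flagB g))%MS.
  by rewrite capmxS.
by rewrite (eqP disj_fg) leqn0 => /eqP.
Qed.

Lemma flagAB_inj f g : flagA f = flagA g -> flagB f = flagB g -> f = g.
Proof.
move=> eqA eqB; apply: val_inj.
by rewrite [val f]surjective_pairing [val g]surjective_pairing; congr pair.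
Qed.

Lemma card_flags_through A (W : 'M[F]_((2 * n).+1)) :
  \rank (val A) = n -> (val A <= W)%MS ->
  #|[set f | (flagA f == A) && (val (flagB f) <= W)%MS]| = qbin1 #|F| (\rank W - n).
Proof.
move=> rA sAW; have -> : qbin1 #|F| (\rank W - n) = #|covers (val A) W|.
  by rewrite card_covers ?rA.
rewrite -(card_in_imset (f := val \o @flagB F n)).
  apply: eq_card => B; rewrite inE; apply/imsetP/and4P => [[f] | [defB /eqP rB sAB sBW]].
    rewrite inE => /andP [/eqP <- sBW] ->; have [rA' rB sAB] := flagP f.
    by rewrite /= (valP (flagB f)) rB rA' sAB sBW.
  have flag_AB : is_flag (A, exist _ B defB : subsp F (2 * n).+1).
    by rewrite /is_flag /= rB rA sAB !eqxx.
  by exists (Sub _ flag_AB); rewrite // inE /flagA /flagB /= eqxx.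
move=> f g; rewrite !inE => /andP [/eqP fA _] /andP [/eqP gA _] /val_inj eqB.
by apply: flagAB_inj; rewrite ?fA ?gA.
Qed.

Lemma maximal_cocliqueP C f : 0 < n -> maximal_coclique C ->
  f \in C <-> (forall g, g \in C -> ~~ opposite f g).
Proof.
move=> n_gt0 [cliqueC maxC]; split=> [fC g gC | oppNf]; first exact: cliqueC.
have cliqueCf : coclique (f |: C).
  move=> x y /setU1P [-> | xC] /setU1P [-> | yC].
  - exact: opposite_irrefl.
  - exact: oppNf.
  - by rewrite opposite_sym oppNf.
  - exact: cliqueC.
by rewrite -(maxC _ cliqueCf (subsetUr _ _)) setU11.
Qed.

End Flags.

Section Ceiling.

Variables (F : finFieldType) (n : nat) (C : {set flag F n}) (A : subsp F (2 * n).+1).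
Hypothesis rankA : \rank (val A) = n.

Definition ceiling : 'M[F]_((2 * n).+1) :=
  (\bigcap_(g | (g \in C) && disjoint_sp A (flagB g)) (val A + val (flagA g)))%MS.

Lemma sub_ceiling : (val A <= ceiling)%MS.
Proof. by apply/sub_bigcapmxP => g _; apply: addsmxSl. Qed.

Lemma mem_maximal_coclique_ceiling f : 0 < n -> maximal_coclique C ->
  flagA f = A -> (f \in C) = (val (flagB f) <= ceiling)%MS.
Proof.
move=> n_gt0 maxC fA; apply/idP/idP => [fC | /sub_bigcapmxP sub_f].
  apply/sub_bigcapmxP => g /andP [gC disj_g]; rewrite -fA -not_opposite_sub ?fA //.
  by have [cliqueC _] := maxC; apply: cliqueC.
apply/(maximal_cocliqueP _ n_gt0 maxC) => g gC.
case disj_g: (disjoint_sp (flagA f) (flagB g)); last by rewrite /opposite disj_g.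
by rewrite not_opposite_sub // fA sub_f // gC -fA.
Qed.

Lemma mxrank_ceiling_full :
  \rank ceiling = (2 * n).+1 <-> (forall g, g \in C -> ~~ disjoint_sp (flagB g) A).
Proof.
split=> [rank_full g gC | disjN].
  apply/negP => disj_g; rewrite disjoint_spC in disj_g.
  have /mxrankS : (ceiling <= val A + val (flagA g))%MS.
    by rewrite /ceiling (bigD1 g) ?gC ?disj_g //= capmxSl.
  have [rA' _ _] := flagP g; have := (mxrank_adds_leqif (val A) (val (flagA g))).1.
  by rewrite rank_full rankA rA'; lia.
rewrite /ceiling big_pred0 ?mxrank1 // => g.
by case: (boolP (g \in C)) => //= gC; rewrite disjoint_spC (negbTE (disjN g gC)).
Qed.

End Ceiling.

Theorem mainTheorem4 (F : finFieldType) (n : nat) (Hn : (2 <= n)%N)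
  (C : {set flag F n}) (HC : maximal_coclique C)
  (A : subsp F (2 * n).+1) (HA : exists2 f, f \in C & flagA f = A) :
  (exists2 k : nat, (1 <= k <= n.+1)%N &
     #|[set f in C | flagA f == A]| = qbin1 #|F| k) /\
  (#|[set f in C | flagA f == A]| = qbin1 #|F| n.+1 <->
     (forall f, f \in C -> ~~ disjoint_sp (flagB f) A)).
Proof.
have [f0 f0C f0A] := HA; have [rankA _ _] := flagP f0; rewrite f0A in rankA.
have q_gt1 : 1 < #|F| := card_finNzRing_gt1 F.
set k := \rank (ceiling C A) - n.
have rW : \rank (ceiling C A) = n + k.
  by rewrite subnKC // -[leqLHS]rankA mxrankS ?sub_ceiling.
have cardE : #|[set f in C | flagA f == A]| = qbin1 #|F| k.
  rewrite -(card_flags_through rankA (sub_ceiling C A)); apply: eq_card => f.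
  rewrite !inE [LHS]andbC.
  by case: eqP => //= fA; rewrite (mem_maximal_coclique_ceiling (ltnW Hn) HC fA).
have k_gt0 : 0 < k.
  rewrite -(qbin1_gt0 q_gt1) -cardE; apply/card_gt0P.
  by exists f0; rewrite inE f0C f0A eqxx.
have k_le : k <= n.+1 by have := rank_leq_col (ceiling C A); lia.
split; first by exists k; rewrite ?k_gt0.
rewrite cardE; apply: iff_trans (mxrank_ceiling_full C rankA); rewrite rW.
by split=> [/(qbin1_inj q_gt1) | rk]; [lia | congr qbin1; lia].
Qed.
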